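(* Let $k,n\ge 1$ and let $A$ be a $d\times d$ nonnegative matrix. Then $A\in P^*(k,n)$ if and only if $A\in P(k,n)$ and every $k$-tuple $(a_1,\dots,a_k)\in D^k$ has a common predecessor, i.e. there is $i\in D$ with $A(i,a_j)>0$ for all $j=1,\dots,k$.
   Context: Let $K=\{1,\dots,k\}$ and $D=\{1,\dots,d\}$. The $k$-tree $\tau$ is the set $K^*$ of all finite words over $K$; the empty word $\epsilon$ is the root, and for a word $x$ and $g\in K$ the word $xg$ is a child of $x$. $L_n$ denotes the set of words of length exactly $n$. Let $X_A=\{\lambda\in D^{\tau}: A(\lambda(x),\lambda(xg))>0 \text{ for all } x\in\tau,\ g\in K\}$. For $i\in D$ and $\mathcal T\subseteq\tau$, the arrival set is $\mathcal A(i,\epsilon,\mathcal T)=\{\lambda|_{\mathcal T}:\lambda\in X_A,\ \lambda(\epsilon)=i\}$. $A\in P(k,n)$ means $\mathcal A(i,\epsilon,L_n)=\mathcal A(j,\epsilon,L_n)$ for all $i,j\in D$. $A\in P^*(k,n)$ means $\mathcal A(i,\epsilon,L_n)=D^{L_n}$ for all $i\in D$. *)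

From mathcomp Require Import all_boot all_order all_algebra.
Unset Printing Implicit Defensive.
Import Order.TTheory GRing.Theory Num.Theory.
Local Open Scope ring_scope.

(* K = 'I_k, D = 'I_d.  The k-tree tau = K^* is seq 'I_k; root = [::];
   the child x g of x is rcons x g.  L_n = words of length n = n.-tuple 'I_k. *)

Section Defs.
Variables (R : numDomainType) (k d : nat).

Definition in_XA (A : 'M[R]_d) (lam : seq 'I_k -> 'I_d) : Prop :=
  forall (x : seq 'I_k) (g : 'I_k), 0 < A (lam x) (lam (rcons x g)).

Definition arrival (A : 'M[R]_d) (i : 'I_d) (n : nat)
    : {ffun n.-tuple 'I_k -> 'I_d} -> Prop :=
  fun f => exists lam, in_XA A lam /\ lam [::] = i /\
                      forall w : n.-tuple 'I_k, lam (tval w) = f w.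

Definition inP (A : 'M[R]_d) (n : nat) : Prop :=
  forall i j : 'I_d, forall f, arrival A i n f <-> arrival A j n f.

Definition inPstar (A : 'M[R]_d) (n : nat) : Prop :=
  forall i : 'I_d, forall f, arrival A i n f.
End Defs.
Arguments in_XA {R k d} A lam.
Arguments arrival {R} k {d} A i n f.
Arguments inP {R} k {d} A n.
Arguments inPstar {R} k {d} A n.

From mathcomp Require Import all_boot all_order all_algebra.
Import Order.TTheory GRing.Theory Num.Theory.
Local Open Scope ring_scope.

Set Implicit Arguments.
Unset Strict Implicit.

(* If every k-tuple of states has a common predecessor, then in particular every
   state b has a predecessor p b; a periodic point of p yields an infinite path
   going forward, so some arrival set is nonempty, and by P(k,n) all of them are.
   Hence every state has a successor.  Any f : L_n -> D is then realised from
   some root: below level n fill each node with a common predecessor of its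
   children, above level n follow successors.  P(k,n) moves the root anywhere.
   Conversely, in P*(k,n) the words g0^(n-1) g all share one parent, whose label
   is a common predecessor of the prescribed labels a g. *)

Lemma exists_periodic_point {T : finType} (p : T -> T) (x : T) :
  exists y t, iter t.+1 p y = y.
Proof.
have /trajectP [i lt_i_ord Ei] := looping_order p x.
exists (iter i p x), (order p x - i.+1)%N.
by rewrite -iterD -subSn // subSS subnK // ltnW.
Qed.

Section Arrival.
Variables (R : numDomainType) (k n d : nat) (A : 'M[R]_d).

Definition has_common_predecessors : Prop :=
  forall a : 'I_k -> 'I_d, exists i : 'I_d, forall j : 'I_k, 0 < A i (a j).

Lemma in_XA_of_predecessors (b0 : 'I_d) :
  (forall b : 'I_d, exists i, 0 < A i b) ->
  exists lam : seq 'I_k -> 'I_d, in_XA A lam.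
Proof.
move=> /fin_all_exists [p Hp]; have [y [t Hy]] := exists_periodic_point p b0.
exists (fun x => iter (size x * t) p y) => x g.
by rewrite size_rcons mulSn addnC -{1}Hy -iterD addnS iterS.
Qed.

Lemma arrival_of_in_XA (lam : seq 'I_k -> 'I_d) :
  in_XA A lam -> arrival k A (lam [::]) n [ffun w => lam (tval w)].
Proof. by exists lam; do 2!split=> //; move=> w; rewrite ffunE. Qed.

Lemma arrival_has_successor (i : 'I_d) f :
  (0 < k)%N -> arrival k A i n f -> exists j, 0 < A i j.
Proof.
by move=> k_gt0 [lam [Hlam [<- _]]]; exists (lam [:: Ordinal k_gt0]); exact: Hlam.
Qed.

Lemma inPstar_common_predecessors :
  (0 < k)%N -> (0 < n)%N -> inPstar k A n -> has_common_predecessors.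
Proof.
move=> k_gt0 n_gt0 HP a; pose g0 := Ordinal k_gt0.
have [lam [Hlam [_ Hw]]] := HP (a g0) [ffun w : n.-tuple 'I_k => a (last g0 w)].
exists (lam (nseq n.-1 g0)) => g.
have sz : size (rcons (nseq n.-1 g0) g) == n.
  by rewrite size_rcons size_nseq prednK.
by have := Hw (Tuple sz); rewrite ffunE /= last_rcons => <-; exact: Hlam.
Qed.

Lemma inP_has_successors :
  (0 < k)%N -> inP k A n -> has_common_predecessors ->
  forall i, exists j, 0 < A i j.
Proof.
move=> k_gt0 HP Hcp i.
have [lam Hlam] : exists lam : seq 'I_k -> 'I_d, in_XA A lam.
  apply: (in_XA_of_predecessors i) => b.
  by have [c Hc] := Hcp (fun=> b); exists c; exact: Hc (Ordinal k_gt0).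
exact/arrival_has_successor/(HP _ _ _).2/arrival_of_in_XA.
Qed.

Section Fill.
Variables (f : {ffun n.-tuple 'I_k -> 'I_d}) (i0 : 'I_d).
Variables (sc : 'I_d -> 'I_d) (cp : {ffun 'I_k -> 'I_d} -> 'I_d).
Hypothesis sc_pos : forall i, 0 < A i (sc i).
Hypothesis cp_pos : forall a g, 0 < A (cp a) (a g).

(* [fill_below t x] labels the node [x] at depth [n - t]; [i0] is a junk value
   for words of the wrong length, never reached from the root. *)
Fixpoint fill_below (t : nat) (x : seq 'I_k) : 'I_d :=
  if t is t'.+1 then cp [ffun g => fill_below t' (rcons x g)]
  else odflt i0 (omap f (insub x)).

Definition fill (x : seq 'I_k) : 'I_d :=
  iter (size x - n) sc (fill_below (n - size x) (take n x)).

Lemma fill_in_XA : in_XA A fill.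
Proof.
move=> x g; rewrite /fill size_rcons.
case: (ltnP (size x) n) => Hx.
- have /eqP -> : (size x - n == 0)%N by rewrite subn_eq0 ltnW.
  have /eqP -> : ((size x).+1 - n == 0)%N by rewrite subn_eq0.
  rewrite !take_oversize ?size_rcons ?(ltnW Hx) // -subnSK //=.
  have := cp_pos [ffun g => fill_below (n - (size x).+1) (rcons x g)] g.
  by rewrite ffunE.
- have /eqP -> : (n - (size x).+1 == 0)%N by rewrite subn_eq0 leqW.
  have /eqP -> : (n - size x == 0)%N by rewrite subn_eq0.
  by rewrite subSn // -cats1 takel_cat // iterS.
Qed.

Lemma arrival_fill : arrival k A (fill [::]) n f.
Proof.
exists fill; split; first exact: fill_in_XA; split=> // w.
by rewrite /fill size_tuple subnn take_oversize ?size_tuple //= valK.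
Qed.

End Fill.
End Arrival.

Theorem proposition2p6 (R : numDomainType) (k n d : nat) (A : 'M[R]_d) :
  (1 <= k)%N -> (1 <= n)%N -> (forall i j, 0 <= A i j) ->
  (inPstar k A n <->
   (inP k A n /\
    forall a : 'I_k -> 'I_d, exists i : 'I_d, forall j : 'I_k, 0 < A i (a j))).
Proof.
move=> k_gt0 n_gt0 _; split.
  move=> HP; split; first by move=> i j f; split=> _; apply: HP.
  exact: inPstar_common_predecessors k_gt0 n_gt0 HP.
move=> [HP Hcp] i f.
have [sc Hsc] := fin_all_exists (inP_has_successors k_gt0 HP Hcp).
have [cp Hcp'] := fin_all_exists (fun a : {ffun 'I_k -> 'I_d} => Hcp a).
exact: (HP _ i f).1 (arrival_fill f i Hsc Hcp').
Qed.
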